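(* Let $\Lambda=K\mathcal{Q}/I$ be a finite-dimensional algebra over a field $K$ as in the context, let $A\geqslant1$ and let $\tilde{\Lambda}=\tilde{\Lambda}_A$ be its stretched algebra, $\varepsilon=\sum_{u\in\mathcal{Q}_0}u\in\tilde{\Lambda}$ and $B=\varepsilon\tilde{\Lambda}\varepsilon$. Let $w$ be a vertex of $\tilde{\mathcal{Q}}_A$ not in $\mathcal{Q}_0$, and let $v=\mathfrak{o}(\tilde{p}_w)$, $v'=\mathfrak{t}(\tilde{q}_w)$. Then: (1) $v'B\cong\tilde{q}_wB$ as right $B$-modules; (2) $v'\tilde{\Lambda}\cong\tilde{q}_w\tilde{\Lambda}$ as right $\tilde{\Lambda}$-modules; (3) $Bv\cong B\tilde{p}_w$ as left $B$-modules; (4) $\tilde{\Lambda}v\cong\tilde{\Lambda}\tilde{p}_w$ as left $\tilde{\Lambda}$-modules.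
   Context: Conventions: $\mathcal{Q}$ is a finite quiver with vertex set $\mathcal{Q}_0$; $\mathfrak{o}(\alpha)$, $\mathfrak{t}(\alpha)$ denote start and end of an arrow or path; paths are written left to right. An element $x\in K\mathcal{Q}$ is uniform if $x=vx=xv'$ for vertices $v,v'$. $\Lambda=K\mathcal{Q}/I$ is finite-dimensional with $I$ an admissible ideal generated by a minimal set $\{g^2_1,\dots,g^2_m\}$ of uniform elements. Stretched algebra: for $A\geqslant1$, the quiver $\tilde{\mathcal{Q}}_A$ has all vertices of $\mathcal{Q}$ plus, for each arrow $\alpha$ of $\mathcal{Q}$, new vertices $w_1,\dots,w_{A-1}$; each arrow $\alpha$ is replaced by arrows $\alpha_1,\dots,\alpha_A$ with $\mathfrak{o}(\alpha_1)=\mathfrak{o}(\alpha)$, $\mathfrak{t}(\alpha_j)=\mathfrak{o}(\alpha_{j+1})=w_j$ ($1\le j\le A-1$), $\mathfrak{t}(\alpha_A)=\mathfrak{t}(\alpha)$, and the only arrows incident with $w_j$ are $\alpha_j,\alpha_{j+1}$. $\theta^*:K\mathcal{Q}\to K\tilde{\mathcal{Q}}_A$ is the algebra homomorphism fixing vertices and sending $\alpha\mapsto\alpha_1\cdots\alpha_A$; $\tilde{I}_A$ is the ideal generated by $\theta^*(g^2_1),\dots,\theta^*(g^2_m)$; $\tilde{\Lambda}_A=K\tilde{\mathcal{Q}}_A/\tilde{I}_A$. For a new vertex $w=w_i$ on the path replacing the arrow $\alpha$, $\tilde{p}_w=\alpha_1\cdots\alpha_i$ and $\tilde{q}_w=\alpha_{i+1}\cdots\alpha_A$,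 viewed in $\tilde{\Lambda}$; thus $\mathfrak{o}(\tilde{p}_w)=\mathfrak{o}(\alpha)$, $\mathfrak{t}(\tilde{q}_w)=\mathfrak{t}(\alpha)$. *)

From HB Require Import structures.
From mathcomp Require Import all_boot all_order all_algebra.
Set Implicit Arguments. Unset Strict Implicit. Unset Printing Implicit Defensive.
Import GRing.Theory.
Local Open Scope ring_scope.

(* Paths are written left to right: (v, [a1; ...; ak]) with            *)
(* src a1 = v and tgt a_i = src a_(i+1); (v, [::]) is the vertex v.    *)
Section PathAlgebra.
Variables (K : fieldType) (V E : finType) (src tgt : E -> V).

Definition rpath := (V * seq E)%type.

Definition rvalid (p : rpath) : bool :=
  match p.2 with
  | [::] => true
  | a :: s => (src a == p.1) && path (fun x y => tgt x == src y) a s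
  end.

Definition qpath := {p : rpath | rvalid p}.

Definition rsrc (p : rpath) : V := p.1.
Definition rtgt (p : rpath) : V := last p.1 (map tgt p.2).
Definition plen (p : qpath) : nat := size (val p).2.

(* an element of KQ is given by its coefficient function on paths *)
Definition KQ := qpath -> K.

Definition fin_supp (x : KQ) : Prop :=
  exists s : seq qpath, forall p, p \notin s -> x p = 0.

(* coefficient at a raw pair, 0 if it is not a path *)
Definition ext (x : KQ) (r : rpath) : K :=
  if (insub r : option qpath) is Some p then x p else 0.

Definition pel (r : rpath) : KQ := fun p => (val p == r)%:R.
Definition vtx (u : V) : KQ := pel (u, [::]).

Definition kq0 : KQ := fun _ => 0.
Definition kqadd (x y : KQ) : KQ := fun p => x p + y p.
Definition kqopp (x : KQ) : KQ := fun p => - x p.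

(* multiplication: concatenation of paths, extended bilinearly *)
Definition kqmul (x y : KQ) : KQ := fun p =>
  \sum_(k < (size (val p).2).+1)
     ext x ((val p).1, take k (val p).2) *
     ext y (rtgt ((val p).1, take k (val p).2), drop k (val p).2).

Fixpoint kqsum (n : nat) (F : nat -> KQ) : KQ :=
  if n is n'.+1 then kqadd (kqsum n' F) (F n') else kq0.

Definition in_ideal (gs : seq KQ) (x : KQ) : Prop :=
  exists (n : nat) (a b : nat -> KQ) (j : nat -> nat),
    (forall i, (i < n)%N -> [/\ fin_supp (a i), fin_supp (b i) & (j i < size gs)%N]) /\
    x =1 kqsum n (fun i => kqmul (kqmul (a i) (nth kq0 gs (j i))) (b i)).

Definition eqmod (gs : seq KQ) (x y : KQ) : Prop := in_ideal gs (kqadd x (kqopp y)).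

Definition uniform (x : KQ) : Prop :=
  exists v v' : V, x =1 kqmul (vtx v) x /\ x =1 kqmul x (vtx v').

(* the ideal generated by gs is admissible: J^N <= I <= J^2,
   J the arrow ideal (J^k is spanned by the paths of length >= k) *)
Definition admissible (gs : seq KQ) : Prop :=
  (forall x, in_ideal gs x -> forall p, (plen p < 2)%N -> x p = 0) /\
  (exists N : nat, forall p, (N <= plen p)%N -> in_ideal gs (pel (val p))).

Definition minimal_gens (gs : seq KQ) : Prop :=
  forall i, (i < size gs)%N ->
    ~ in_ideal (take i gs ++ drop i.+1 gs) (nth kq0 gs i).

(* elements of the quotient algebra KQ/<gs> *)
Definition elt (x : KQ) : Prop := fin_supp x.

(* m lies in the right module x R (resp. left module R x) inside KQ/<gs>,
   where R is a set of elements (given by representatives) *)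
Definition in_rmod (gs : seq KQ) (R : KQ -> Prop) (x m : KQ) : Prop :=
  exists r, elt r /\ R r /\ eqmod gs m (kqmul x r).
Definition in_lmod (gs : seq KQ) (R : KQ -> Prop) (x m : KQ) : Prop :=
  exists r, elt r /\ R r /\ eqmod gs m (kqmul r x).

Definition rmod_iso (gs : seq KQ) (R : KQ -> Prop) (x y : KQ) : Prop :=
  exists phi : KQ -> KQ,
    (forall m, in_rmod gs R x m -> in_rmod gs R y (phi m)) /\
    (forall m m', in_rmod gs R x m -> in_rmod gs R x m' ->
        eqmod gs m m' -> eqmod gs (phi m) (phi m')) /\
    (forall m m', in_rmod gs R x m -> in_rmod gs R x m' ->
        eqmod gs (phi (kqadd m m')) (kqadd (phi m) (phi m'))) /\
    (forall m r, in_rmod gs R x m -> elt r -> R r ->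
        eqmod gs (phi (kqmul m r)) (kqmul (phi m) r)) /\
    (forall m m', in_rmod gs R x m -> in_rmod gs R x m' ->
        eqmod gs (phi m) (phi m') -> eqmod gs m m') /\
    (forall n, in_rmod gs R y n -> exists m, in_rmod gs R x m /\ eqmod gs (phi m) n).

Definition lmod_iso (gs : seq KQ) (R : KQ -> Prop) (x y : KQ) : Prop :=
  exists phi : KQ -> KQ,
    (forall m, in_lmod gs R x m -> in_lmod gs R y (phi m)) /\
    (forall m m', in_lmod gs R x m -> in_lmod gs R x m' ->
        eqmod gs m m' -> eqmod gs (phi m) (phi m')) /\
    (forall m m', in_lmod gs R x m -> in_lmod gs R x m' ->
        eqmod gs (phi (kqadd m m')) (kqadd (phi m) (phi m'))) /\
    (forall m r, in_lmod gs R x m -> elt r -> R r ->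
        eqmod gs (phi (kqmul r m)) (kqmul r (phi m))) /\
    (forall m m', in_lmod gs R x m -> in_lmod gs R x m' ->
        eqmod gs (phi m) (phi m') -> eqmod gs m m') /\
    (forall n, in_lmod gs R y n -> exists m, in_lmod gs R x m /\ eqmod gs (phi m) n).

End PathAlgebra.

(* New vertices: inr (a, j), j : 'I_(A-1), is the vertex w_(j+1) on    *)
(* the path replacing the arrow a.  Arrows: (a, i), i : 'I_A, is the   *)
(* arrow a_(i+1).                                                      *)
Section Stretch.
Variables (V E : finType) (src tgt : E -> V) (A : nat).

Definition sV : finType := (V + (E * 'I_A.-1))%type.
Definition sE : finType := (E * 'I_A)%type.

Definition ssrc (e : sE) : sV :=
  let: (a, i) := e in
  if (val i == 0)%N then inl (src a)
  else if (insub (val i).-1 : option 'I_A.-1) is Some j then inr (a, j)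
       else inl (src a).

Definition stgt (e : sE) : sV :=
  let: (a, i) := e in
  if (insub (val i) : option 'I_A.-1) is Some j then inr (a, j)
  else inl (tgt a).

Definition stretch (a : E) : seq sE := [seq (a, i) | i <- enum 'I_A].

Definition stretch_path (r : rpath V E) : rpath sV sE :=
  (inl r.1, flatten (map stretch r.2)).

Definition destretch (r : rpath sV sE) : option (rpath V E) :=
  match r.1 with
  | inl v =>
      let s' := [seq x.1 | x <- r.2 & (val x.2 == 0)%N] in
      if flatten (map stretch s') == r.2 then Some (v, s') else None
  | inr _ => None
  end.

(* theta^* : K Q -> K Q~_A, the linear extension of stretch_path
   (it is the algebra homomorphism fixing vertices, alpha |-> alpha_1..alpha_A) *)
Definition theta (K : fieldType) (x : KQ K src tgt) : KQ K ssrc stgt :=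
  fun p => if destretch (val p) is Some r then ext x r else 0.

(* p~_w = alpha_1 ... alpha_(j+1) and q~_w = alpha_(j+2) ... alpha_A
   for w = w_(j+1) = inr (a, j) *)
Definition ptil_raw (w : sV) : rpath sV sE :=
  match w with
  | inl u => (inl u, [::])
  | inr (a, j) => (inl (src a), [seq (a, i) | i <- enum 'I_A & (val i <= val j)%N])
  end.
Definition qtil_raw (w : sV) : rpath sV sE :=
  match w with
  | inl u => (inl u, [::])
  | inr (a, j) => (w, [seq (a, i) | i <- enum 'I_A & (val j < val i)%N])
  end.

Definition ptil (K : fieldType) (w : sV) : KQ K ssrc stgt := @pel K _ _ ssrc stgt (ptil_raw w).
Definition qtil (K : fieldType) (w : sV) : KQ K ssrc stgt := @pel K _ _ ssrc stgt (qtil_raw w).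

Definition epsQ (K : fieldType) : KQ K ssrc stgt :=
  fun p => \sum_(u : V) @vtx K _ _ ssrc stgt (inl u) p.

(* representatives of elements of B = eps Lambda~ eps *)
Definition inB (K : fieldType) (r : KQ K ssrc stgt) : Prop :=
  exists c, fin_supp c /\ r =1 kqmul (kqmul (epsQ K) c) (epsQ K).

Definition inLam (K : fieldType) (r : KQ K ssrc stgt) : Prop := True.

End Stretch.

From Pilot Require Import Defs.
From mathcomp Require Import all_boot all_order all_algebra.
From mathcomp Require Import zify.
Set Implicit Arguments. Unset Strict Implicit. Unset Printing Implicit Defensive.
Import GRing.Theory.
Local Open Scope ring_scope.

(* Let q = q~_w.  Every relation theta*(g) is a combination of paths whose
   endpoints are old vertices, while every vertex of q before its target is new.
   Hence deleting the prefix q from the paths that begin with it (and killing the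
   other paths) maps the ideal I~ into itself and sends q m to v' m.  So left
   multiplication by q, which maps v' Lambda~ onto q Lambda~ linearly, is also
   injective modulo I~.  Dually, right
   multiplication by p~_w is inverted by deleting the suffix p~_w. *)

Section PathAlgebra.
Variables (K : fieldType) (V E : finType) (src tgt : E -> V).

Local Notation rpath := (rpath V E).
Local Notation qpath := (qpath src tgt).
Local Notation KQ := (KQ K src tgt).
Local Notation rvalid := (rvalid src tgt).
Local Notation rtgt := (rtgt tgt).
Local Notation ext := (@ext K V E src tgt).
Local Notation kqmul := (@kqmul K V E src tgt).
Local Notation kqadd := (@kqadd K V E src tgt).
Local Notation kqopp := (@kqopp K V E src tgt).
Local Notation kq0 := (@kq0 K V E src tgt).
Local Notation kqsum := (@kqsum K V E src tgt).
Local Notation pel := (@pel K V E src tgt).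
Local Notation vtx := (@vtx K V E src tgt).

Lemma rtgt_cat (v : V) s1 s2 : rtgt (v, s1 ++ s2) = rtgt (rtgt (v, s1), s2).
Proof. by rewrite /Defs.rtgt /= map_cat last_cat. Qed.

Lemma rvalid_cat (v : V) s1 s2 :
  rvalid (v, s1 ++ s2) = rvalid (v, s1) && rvalid (rtgt (v, s1), s2).
Proof.
case: s1 => [|a s1] //=; rewrite /Defs.rvalid /Defs.rtgt /= cat_path -andbA.
congr (_ && (_ && _)); rewrite (last_map tgt s1 a).
by case: s2 => [|b s2] //=; rewrite eq_sym.
Qed.

Lemma rvalid_take_drop (v : V) s k :
  rvalid (v, s) = rvalid (v, take k s) && rvalid (rtgt (v, take k s), drop k s).
Proof. by rewrite -rvalid_cat cat_take_drop. Qed.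

Lemma rtgt_take_src (v : V) s k a0 : rvalid (v, s) -> (k < size s)%N ->
  rtgt (v, take k s) = src (nth a0 s k).
Proof.
move=> hs hk; move: hs; rewrite (rvalid_take_drop v s k) (drop_nth a0 hk).
by case/andP=> _ /andP [/eqP ->].
Qed.

Lemma rtgt_take_tgt (v : V) s k a0 : (0 < k <= size s)%N ->
  rtgt (v, take k s) = tgt (nth a0 s k.-1).
Proof.
by case: k => // k hk; rewrite (take_nth a0 hk) /Defs.rtgt /= map_rcons last_rcons.
Qed.

Lemma ext_val (x : KQ) (p : qpath) : ext x (val p) = x p.
Proof. by rewrite /ext valK. Qed.

Lemma ext_invalid (x : KQ) r : ~~ rvalid r -> ext x r = 0.
Proof. by move=> h; rewrite /ext insubN. Qed.

Lemma ext_neq0 (x : KQ) r : ext x r != 0 -> exists p : qpath, val p = r /\ x p != 0.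
Proof. by rewrite /ext; case: insubP => [p _ <- h|]; [exists p | rewrite eqxx]. Qed.

Lemma ext_vanish (x : KQ) r : (forall p : qpath, val p = r -> x p = 0) -> ext x r = 0.
Proof. by move=> h; rewrite /ext; case: insubP => // p _ /h. Qed.

Lemma eq_ext (x y : KQ) r : x =1 y -> ext x r = ext y r.
Proof. by move=> h; rewrite /ext; case: insubP. Qed.

Lemma ext_add (x y : KQ) r : ext (kqadd x y) r = ext x r + ext y r.
Proof. by rewrite /ext; case: insubP => // _; rewrite addr0. Qed.

Lemma ext_opp (x : KQ) r : ext (kqopp x) r = - ext x r.
Proof. by rewrite /ext; case: insubP => // _; rewrite oppr0. Qed.

Lemma ext_kq0 r : ext kq0 r = 0.
Proof. by rewrite /ext; case: insubP. Qed.

Lemma ext_pel q r : ext (pel q) r = ((r == q) && rvalid r)%:R.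
Proof.
rewrite /ext; case: insubP => [p _ <-|/negbTE ->]; last by rewrite andbF.
by rewrite (valP p) andbT.
Qed.

Lemma kqsumE n F p : kqsum n F p = \sum_(i < n) F i p.
Proof. by elim: n => [|n IH] /=; rewrite ?big_ord0 // /Defs.kqadd IH big_ord_recr. Qed.

Lemma eq_kqsum n F F' : (forall i, (i < n)%N -> F i =1 F' i) -> kqsum n F =1 kqsum n F'.
Proof. by move=> h p; rewrite !kqsumE; apply: eq_bigr => i _; rewrite h. Qed.

Definition kqmul_at (x y : KQ) (r : rpath) : K :=
  \sum_(0 <= k < (size r.2).+1)
     ext x (r.1, take k r.2) * ext y (rtgt (r.1, take k r.2), drop k r.2).

Lemma kqmulE x y p : kqmul x y p = kqmul_at x y (val p).
Proof. by rewrite /Defs.kqmul /kqmul_at big_mkord. Qed.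

Lemma ext_kqmul x y r : ext (kqmul x y) r = kqmul_at x y r.
Proof.
case hr: (rvalid r); first by rewrite /ext insubT /= kqmulE.
rewrite ext_invalid ?hr // /kqmul_at big1 // => k _.
case: r hr => v s /= hr; move: hr; rewrite (rvalid_take_drop v s k).
by case/nandP=> h; [rewrite (ext_invalid x h) mul0r | rewrite (ext_invalid y h) mulr0].
Qed.

Lemma kqmulA x y z : kqmul (kqmul x y) z =1 kqmul x (kqmul y z).
Proof.
move=> p; rewrite !kqmulE; case: (val p) => v s; rewrite /kqmul_at /=.
set n := size s.
(* both sides sum [F l k] over the factorisations of [s] at [l <= k] *)
pose F l k := ext x (v, take l s) * ext y (rtgt (v, take l s), take (k - l) (drop l s))
              * ext z (rtgt (v, take k s), drop k s).
transitivity (\sum_(0 <= k < n.+1) \sum_(0 <= l < n.+1) (if (l <= k)%N then F l k else 0)).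
  apply: eq_big_nat => k /andP [_ hk].
  rewrite ext_kqmul /kqmul_at /= size_takel // mulr_suml.
  rewrite (big_nat_widen _ _ _ _ _ hk) big_mkcond /=.
  apply: eq_big_nat => l /andP [_ hl]; rewrite ltnS.
  by case: ifP => // hlk; rewrite /F take_takel // take_drop subnK.
rewrite exchange_big_nat; apply: eq_big_nat => l /andP [_ hl].
rewrite ext_kqmul /kqmul_at /= size_drop mulr_sumr -big_mkcond /=.
transitivity (\sum_(0 + l <= k < n.+1) F l k).
  by rewrite (big_nat_widenl _ _ _ _ _ (leq0n l)).
rewrite big_addn -subSn //; apply: eq_big_nat => m _.
by rewrite /F addnK mulrA -rtgt_cat -takeD drop_drop (addnC m l).
Qed.

Lemma eq_kqmull x x' y : x =1 x' -> kqmul x y =1 kqmul x' y.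
Proof. by move=> h p; rewrite !kqmulE /kqmul_at; apply: eq_bigr => k _; rewrite (eq_ext _ h). Qed.

Lemma eq_kqmulr x y y' : y =1 y' -> kqmul x y =1 kqmul x y'.
Proof. by move=> h p; rewrite !kqmulE /kqmul_at; apply: eq_bigr => k _; rewrite (eq_ext _ h). Qed.

Lemma kqmulDl x y z : kqmul (kqadd x y) z =1 kqadd (kqmul x z) (kqmul y z).
Proof.
move=> p; rewrite /Defs.kqadd !kqmulE /kqmul_at -big_split.
by apply: eq_bigr => k _; rewrite ext_add mulrDl.
Qed.

Lemma kqmulDr x y z : kqmul x (kqadd y z) =1 kqadd (kqmul x y) (kqmul x z).
Proof.
move=> p; rewrite /Defs.kqadd !kqmulE /kqmul_at -big_split.
by apply: eq_bigr => k _; rewrite ext_add mulrDr.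
Qed.

Lemma kqmulNl x y : kqmul (kqopp x) y =1 kqopp (kqmul x y).
Proof.
move=> p; rewrite /Defs.kqopp !kqmulE /kqmul_at -sumrN.
by apply: eq_bigr => k _; rewrite ext_opp mulNr.
Qed.

Lemma kqmulNr x y : kqmul x (kqopp y) =1 kqopp (kqmul x y).
Proof.
move=> p; rewrite /Defs.kqopp !kqmulE /kqmul_at -sumrN.
by apply: eq_bigr => k _; rewrite ext_opp mulrN.
Qed.

Lemma kqmul0l y : kqmul kq0 y =1 kq0.
Proof. by move=> p; rewrite kqmulE /kqmul_at big1 // => k _; rewrite ext_kq0 mul0r. Qed.

Lemma kqmul0r x : kqmul x kq0 =1 kq0.
Proof. by move=> p; rewrite kqmulE /kqmul_at big1 // => k _; rewrite ext_kq0 mulr0. Qed.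

Lemma kqmul_vtxl u x : kqmul (vtx u) x =1 fun p => if rsrc (val p) == u then x p else 0.
Proof.
move=> p; rewrite kqmulE -ext_val /rsrc; case: (val p) => v s /=.
rewrite /kqmul_at /= big_nat_recl // big_nat big1 => [|k /andP [_ hk]].
  rewrite addr0 ext_pel take0 drop0 /= andbT xpair_eqE eqxx andbT.
  by case: (v == u); rewrite ?mul1r ?mul0r.
by rewrite ext_pel xpair_eqE; case: s hk => //= a s _; rewrite andbF mul0r.
Qed.

Lemma kqmul_vtxr u x : kqmul x (vtx u) =1 fun p => if rtgt (val p) == u then x p else 0.
Proof.
move=> p; rewrite kqmulE -ext_val; case: (val p) => v s /=.
rewrite /kqmul_at /= big_nat_recr // big_nat big1 => [|k /andP [_ hk]].
  rewrite /= add0r ext_pel take_size drop_size /= andbT xpair_eqE eqxx andbT.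
  by case: (_ == u); rewrite ?mulr1 ?mulr0.
have /negbTE hd : drop k s != [::] by rewrite -size_eq0 size_drop subn_eq0 -ltnNge.
by rewrite ext_pel xpair_eqE hd andbF andFb mulr0.
Qed.

Lemma vtx_idem u : kqmul (vtx u) (vtx u) =1 vtx u.
Proof.
move=> p; rewrite kqmul_vtxl /Defs.vtx /Defs.pel /rsrc.
by case: eqP => // h; case: eqP => // e; rewrite e in h.
Qed.

Lemma pel_vtxl q : kqmul (vtx (rsrc q)) (pel q) =1 pel q.
Proof.
move=> p; rewrite kqmul_vtxl /Defs.pel.
by case: eqP => // h; case: eqP => // e; rewrite e in h.
Qed.

Lemma pel_vtxr q : kqmul (pel q) (vtx (rtgt q)) =1 pel q.
Proof.
move=> p; rewrite kqmul_vtxr /Defs.pel.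
by case: eqP => // h; case: eqP => // e; rewrite e in h.
Qed.

Lemma fin_supp_pel q : fin_supp (pel q).
Proof.
exists (pmap insub [:: q]) => p; rewrite /Defs.pel mem_pmap /=.
by case: eqP => // <-; rewrite valK inE eqxx.
Qed.

Lemma fin_supp_vtx u : fin_supp (vtx u).
Proof. exact: fin_supp_pel. Qed.

Lemma fin_supp_opp x : fin_supp x -> fin_supp (kqopp x).
Proof. by case=> s hs; exists s => p /hs; rewrite /Defs.kqopp => ->; rewrite oppr0. Qed.

Lemma fin_supp_mul x y : fin_supp x -> fin_supp y -> fin_supp (kqmul x y).
Proof.
case=> sx hsx [sy hsy].
exists (pmap (fun ab : qpath * qpath => insub ((val ab.1).1, (val ab.1).2 ++ (val ab.2).2))
          [seq (a, b) | a <- sx, b <- sy]) => p hp.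
rewrite kqmulE /kqmul_at big1 // => k _.
have [->|hx] := eqVneq (ext x ((val p).1, take k (val p).2)) 0; first by rewrite mul0r.
have [->|hy] := eqVneq (ext y (rtgt ((val p).1, take k (val p).2), drop k (val p).2)) 0.
  by rewrite mulr0.
case/negP: hp; case: (ext_neq0 hx) => p1 [e1 h1]; case: (ext_neq0 hy) => p2 [e2 h2].
have m1 : p1 \in sx by apply: contraNT h1 => /hsx ->.
have m2 : p2 \in sy by apply: contraNT h2 => /hsy ->.
rewrite mem_pmap; apply/mapP; exists (p1, p2); first exact: allpairs_f.
by rewrite /= e1 e2 /= cat_take_drop -surjective_pairing valK.
Qed.

(** * The ideal generated by a set of relations *)

Section Ideal.
Variable gs : seq KQ.
Local Notation in_ideal := (in_ideal gs).
Local Notation eqmod := (eqmod gs).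
Local Notation G := (nth kq0 gs).

Lemma eq_in_ideal x y : x =1 y -> in_ideal x -> in_ideal y.
Proof. by move=> e [n [a [b [j [H hx]]]]]; exists n, a, b, j; split => // p; rewrite -e hx. Qed.

Lemma in_ideal0 x : x =1 kq0 -> in_ideal x.
Proof. by move=> h; exists 0%N, (fun _ => kq0), (fun _ => kq0), (fun _ => 0%N). Qed.

Lemma in_idealD x y : in_ideal x -> in_ideal y -> in_ideal (kqadd x y).
Proof.
move=> [n1 [a1 [b1 [j1 [H1 h1]]]]] [n2 [a2 [b2 [j2 [H2 h2]]]]].
pose glue T (f1 f2 : nat -> T) i := if (i < n1)%N then f1 i else f2 (i - n1)%N.
exists (n1 + n2)%N, (glue _ a1 a2), (glue _ b1 b2), (glue _ j1 j2); split.
  move=> i hi; rewrite /glue; case: ifP => hin; first exact: H1.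
  by apply: H2; rewrite ltn_subLR // leqNgt hin.
move=> p; rewrite kqsumE big_split_ord /Defs.kqadd h1 h2 !kqsumE /glue /=.
congr (_ + _); apply: eq_bigr => i _; first by rewrite ltn_ord.
by rewrite ltnNge leq_addr /= addKn.
Qed.

Lemma in_ideal_map (f fa fb : KQ -> KQ) :
  (forall x y, x =1 y -> f x =1 f y) ->
  (forall x y, f (kqadd x y) =1 kqadd (f x) (f y)) ->
  f kq0 =1 kq0 ->
  (forall a, fin_supp a -> fin_supp (fa a)) ->
  (forall b, fin_supp b -> fin_supp (fb b)) ->
  (forall a b j, fin_supp a -> fin_supp b -> (j < size gs)%N ->
     f (kqmul (kqmul a (G j)) b) =1 kqmul (kqmul (fa a) (G j)) (fb b)) ->
  forall x, in_ideal x -> in_ideal (f x).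
Proof.
move=> f_eq fD f0 fa_supp fb_supp fG x [n [a [b [j [H hx]]]]].
exists n, (fun i => fa (a i)), (fun i => fb (b i)), j; split.
  by move=> i /H [ha hb hj]; split; auto.
have f_sum m F : f (kqsum m F) =1 kqsum m (fun i => f (F i)).
  by elim: m => [|m IH] /= p; rewrite ?f0 // fD /Defs.kqadd IH.
move=> p; rewrite (f_eq _ _ hx) f_sum; apply: eq_kqsum => i /H [ha hb hj].
exact: fG.
Qed.

Lemma in_idealN x : in_ideal x -> in_ideal (kqopp x).
Proof.
apply: (@in_ideal_map kqopp kqopp id) => //.
- by move=> y z e p; rewrite /Defs.kqopp e.
- by move=> y z p; rewrite /Defs.kqopp /Defs.kqadd opprD.
- by move=> p; rewrite /Defs.kqopp oppr0.
- exact: fin_supp_opp.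
- by move=> a b j _ _ _ p /=; rewrite -kqmulNl (eq_kqmull _ (kqmulNl _ _)).
Qed.

Lemma in_ideal_mull c x : fin_supp c -> in_ideal x -> in_ideal (kqmul c x).
Proof.
move=> hc; apply: (@in_ideal_map (kqmul c) (kqmul c) id) => //.
- by move=> y z; apply: eq_kqmulr.
- exact: kqmulDr.
- exact: kqmul0r.
- by move=> a; apply: fin_supp_mul.
- move=> a b j _ _ _ p /=.
  by rewrite -kqmulA (eq_kqmull _ (fun q => esym (kqmulA _ _ _ q))).
Qed.

Lemma in_ideal_mulr c x : fin_supp c -> in_ideal x -> in_ideal (kqmul x c).
Proof.
move=> hc; apply: (@in_ideal_map (kqmul^~ c) id (kqmul^~ c)) => //.
- by move=> y z; apply: eq_kqmull.
- by move=> y z; apply: kqmulDl.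
- exact: kqmul0l.
- by move=> b hb; apply: fin_supp_mul.
- by move=> a b j _ _ _ p /=; rewrite kqmulA.
Qed.

Lemma eq_eqmod x x' y y' : x =1 x' -> y =1 y' -> eqmod x y -> eqmod x' y'.
Proof. by move=> ex ey; apply: eq_in_ideal => p; rewrite /Defs.kqadd /Defs.kqopp ex ey. Qed.

Lemma eqmod_refl x y : x =1 y -> eqmod x y.
Proof. by move=> e; apply: in_ideal0 => p; rewrite /Defs.kqadd /Defs.kqopp e subrr. Qed.

Lemma eqmod_sym x y : eqmod x y -> eqmod y x.
Proof.
move/in_idealN; apply: eq_in_ideal => p.
by rewrite /Defs.kqadd /Defs.kqopp opprD opprK addrC.
Qed.

Lemma eqmod_trans x y z : eqmod x y -> eqmod y z -> eqmod x z.
Proof.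
move=> hxy hyz; move: (in_idealD hxy hyz); apply: eq_in_ideal => p.
by rewrite /Defs.kqadd /Defs.kqopp addrA subrK.
Qed.

Lemma eqmod_mull c x y : fin_supp c -> eqmod x y -> eqmod (kqmul c x) (kqmul c y).
Proof.
move=> hc /(in_ideal_mull hc); apply: eq_in_ideal => p.
by rewrite kqmulDr /Defs.kqadd kqmulNr.
Qed.

Lemma eqmod_mulr c x y : fin_supp c -> eqmod x y -> eqmod (kqmul x c) (kqmul y c).
Proof.
move=> hc /(in_ideal_mulr hc); apply: eq_in_ideal => p.
by rewrite kqmulDl /Defs.kqadd kqmulNl.
Qed.

End Ideal.

(** * Removing a prefix or a suffix *)

Definition strip_prefix (q : rpath) (x : KQ) : KQ := fun p =>
  if rsrc (val p) == rtgt q then ext x (q.1, q.2 ++ (val p).2) else 0.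
Definition strip_suffix (q : rpath) (x : KQ) : KQ := fun p =>
  if rtgt (val p) == rsrc q then ext x ((val p).1, (val p).2 ++ q.2) else 0.

(* [x] vanishes on the paths starting (resp. ending) at a vertex that [q] passes
   through before its target (resp. after its source). *)
Definition vanish_src_along (q : rpath) (x : KQ) : Prop :=
  forall k p, (k < size q.2)%N -> rsrc (val p) = rtgt (q.1, take k q.2) -> x p = 0.
Definition vanish_tgt_along (q : rpath) (x : KQ) : Prop :=
  forall k p, (0 < k <= size q.2)%N -> rtgt (val p) = rtgt (q.1, take k q.2) -> x p = 0.

Lemma vanish_src_along_mulr q x y : vanish_src_along q x -> vanish_src_along q (kqmul x y).
Proof.
move=> hx k p hk hp; rewrite kqmulE /kqmul_at big1 // => l _.
by rewrite (@ext_vanish x) ?mul0r // => p' e; apply: (hx k) => //; rewrite /rsrc e.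
Qed.

Lemma vanish_tgt_along_mull q x y : vanish_tgt_along q y -> vanish_tgt_along q (kqmul x y).
Proof.
move=> hy k p hk hp; rewrite kqmulE /kqmul_at big1 // => l _.
rewrite (@ext_vanish y) ?mulr0 // => p' e; apply: (hy k) => //; rewrite e -hp.
by case: (val p) => v s; rewrite /= -rtgt_cat cat_take_drop.
Qed.

Section Strip.
Variable q : rpath.
Hypothesis hq : rvalid q.

Lemma ext_strip_prefix x r :
  ext (strip_prefix q x) r = if r.1 == rtgt q then ext x (q.1, q.2 ++ r.2) else 0.
Proof.
case hr: (rvalid r); first by rewrite /ext insubT.
rewrite ext_invalid ?hr //; case: eqP => // e.
by rewrite ext_invalid // rvalid_cat -surjective_pairing hq -e -surjective_pairing hr.
Qed.

Lemma ext_strip_suffix x r :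
  ext (strip_suffix q x) r = if rtgt r == rsrc q then ext x (r.1, r.2 ++ q.2) else 0.
Proof.
case hr: (rvalid r); first by rewrite /ext insubT.
rewrite ext_invalid ?hr //; case: eqP => // e.
by rewrite ext_invalid // rvalid_cat -surjective_pairing hr.
Qed.

Lemma strip_prefix_mul x y : vanish_src_along q y ->
  strip_prefix q (kqmul x y) =1 kqmul (strip_prefix q x) y.
Proof.
move=> hy p; rewrite {1}/strip_prefix kqmulE /kqmul_at /rsrc; case: (val p) => v s /=.
case: eqP => [ev|nev]; last first.
  by rewrite big1 // => k _; rewrite ext_strip_prefix /= (introF eqP nev) mul0r.
rewrite ext_kqmul /kqmul_at /= size_cat; set n := size q.2.
rewrite (@big_cat_nat _ _ _ n) //=; last by rewrite -addnS leq_addr.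
rewrite big1_seq ?add0r => [|k /andP [_]]; last first.
  rewrite mem_index_iota => /andP [_ hk]; rewrite takel_cat ?(ltnW hk) //.
  by rewrite (@ext_vanish y) ?mulr0 // => p' e; rewrite (hy k p' hk) // /rsrc e.
rewrite -{1}(add0n n) big_addn -addnS addKn; apply: eq_big_nat => i _.
rewrite take_cat drop_cat ltnNge leq_addl /= addnK rtgt_cat -surjective_pairing -ev.
by rewrite ext_strip_prefix //= ev eqxx.
Qed.

Lemma strip_suffix_mul x y : vanish_tgt_along q x ->
  strip_suffix q (kqmul x y) =1 kqmul x (strip_suffix q y).
Proof.
move=> hx p; rewrite {1}/strip_suffix kqmulE /kqmul_at; case: (val p) => v s /=.
case: eqP => [ev|nev]; last first.
  rewrite big1 // => k _; rewrite ext_strip_suffix //= -rtgt_cat cat_take_drop.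
  by rewrite (introF eqP nev) mulr0.
rewrite ext_kqmul /kqmul_at /= size_cat.
rewrite (@big_cat_nat _ _ _ (size s).+1) //=; last by rewrite ltnS leq_addr.
rewrite [X in _ + X]big1_seq ?addr0 => [|k /andP [_]]; last first.
  rewrite mem_index_iota => /andP [hk1 hk2]; rewrite take_cat ltnNge ltnW //=.
  rewrite (@ext_vanish x) ?mul0r // => p' e.
  rewrite (hx (k - size s)%N p') //; last by rewrite e rtgt_cat ev.
  by rewrite subn_gt0 hk1 /= leq_subLR -ltnS.
apply: eq_big_nat => k /andP [_ hk].
have drop_catl : drop k (s ++ q.2) = drop k s ++ q.2.
  rewrite drop_cat; case: ltnP => // hks.
  have /eqP -> : k == size s by rewrite eqn_leq hks -ltnS hk.
  by rewrite subnn drop0 drop_size.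
by rewrite takel_cat // drop_catl ext_strip_suffix //= -rtgt_cat cat_take_drop ev eqxx.
Qed.

Lemma strip_prefix_pel m : strip_prefix q (kqmul (pel q) m) =1 kqmul (vtx (rtgt q)) m.
Proof.
move=> p; rewrite kqmul_vtxl /strip_prefix -[m p]ext_val /rsrc; case: (val p) => v s /=.
case: eqP => // ev; rewrite ext_kqmul /kqmul_at /= size_cat; set n := size q.2.
have hn : n \in index_iota 0 (n + size s).+1 by rewrite mem_index_iota ltnS leq_addr.
rewrite (bigD1_seq _ hn (iota_uniq _ _)) /= big1_seq => [|k /andP [hk hk']].
  rewrite addr0 ext_pel take_size_cat // drop_size_cat // -surjective_pairing eqxx hq.
  by rewrite mul1r ev.
rewrite ext_pel; case: eqP => [e|]; last by rewrite mul0r.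
have : size (take k (q.2 ++ s)) = n by rewrite [take _ _](congr1 snd e).
rewrite mem_index_iota ltnS in hk'.
by rewrite size_takel ?size_cat // => /eqP; rewrite (negbTE hk).
Qed.

Lemma strip_suffix_pel m : strip_suffix q (kqmul m (pel q)) =1 kqmul m (vtx (rsrc q)).
Proof.
move=> p; rewrite kqmul_vtxr /strip_suffix -[m p]ext_val; case: (val p) => v s /=.
case: eqP => // ev; rewrite ext_kqmul /kqmul_at /= size_cat; set n := size q.2.
have hn : size s \in index_iota 0 (size s + n).+1 by rewrite mem_index_iota ltnS leq_addr.
rewrite (bigD1_seq _ hn (iota_uniq _ _)) /= big1_seq => [|k /andP [hk hk']].
  rewrite addr0 ext_pel take_size_cat // drop_size_cat // ev /rsrc.
  by rewrite -surjective_pairing eqxx hq mulr1.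
rewrite ext_pel; case: eqP => [e|]; last by rewrite mulr0.
have : size (drop k (s ++ q.2)) = n by rewrite [drop _ _](congr1 snd e).
move: hk hk'; rewrite mem_index_iota size_drop size_cat /n; lia.
Qed.

End Strip.

Lemma fin_supp_strip_prefix q x : fin_supp x -> fin_supp (strip_prefix q x).
Proof.
case=> sx hsx.
exists (pmap (fun p : qpath => insub (rtgt q, drop (size q.2) (val p).2)) sx) => p hp.
rewrite /strip_prefix; case: eqP => // ev; apply/eqP; apply: contraNT hp => hx.
case: (ext_neq0 hx) => p1 [e1 h1].
have m1 : p1 \in sx by apply: contraNT h1 => /hsx ->.
rewrite mem_pmap; apply/mapP; exists p1 => //.
by rewrite e1 /= drop_size_cat // -ev /rsrc -surjective_pairing valK.
Qed.

Lemma fin_supp_strip_suffix q x : fin_supp x -> fin_supp (strip_suffix q x).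
Proof.
case=> sx hsx.
exists (pmap (fun p : qpath =>
  insub ((val p).1, take (size (val p).2 - size q.2) (val p).2)) sx) => p hp.
rewrite /strip_suffix; case: eqP => // ev; apply/eqP; apply: contraNT hp => hx.
case: (ext_neq0 hx) => p1 [e1 h1].
have m1 : p1 \in sx by apply: contraNT h1 => /hsx ->.
rewrite mem_pmap; apply/mapP; exists p1 => //.
by rewrite e1 /= size_cat addnK take_size_cat // -surjective_pairing valK.
Qed.

Lemma eq_strip_prefix q x y : x =1 y -> strip_prefix q x =1 strip_prefix q y.
Proof. by move=> e p; rewrite /strip_prefix (eq_ext _ e). Qed.
Lemma eq_strip_suffix q x y : x =1 y -> strip_suffix q x =1 strip_suffix q y.
Proof. by move=> e p; rewrite /strip_suffix (eq_ext _ e). Qed.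
Lemma strip_prefixD q x y :
  strip_prefix q (kqadd x y) =1 kqadd (strip_prefix q x) (strip_prefix q y).
Proof. by move=> p; rewrite /strip_prefix /Defs.kqadd ext_add; case: ifP; rewrite ?addr0. Qed.
Lemma strip_suffixD q x y :
  strip_suffix q (kqadd x y) =1 kqadd (strip_suffix q x) (strip_suffix q y).
Proof. by move=> p; rewrite /strip_suffix /Defs.kqadd ext_add; case: ifP; rewrite ?addr0. Qed.
Lemma strip_prefixN q x : strip_prefix q (kqopp x) =1 kqopp (strip_prefix q x).
Proof. by move=> p; rewrite /strip_prefix /Defs.kqopp ext_opp; case: ifP; rewrite ?oppr0. Qed.
Lemma strip_suffixN q x : strip_suffix q (kqopp x) =1 kqopp (strip_suffix q x).
Proof. by move=> p; rewrite /strip_suffix /Defs.kqopp ext_opp; case: ifP; rewrite ?oppr0. Qed.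
Lemma strip_prefix0 q : strip_prefix q kq0 =1 kq0.
Proof. by move=> p; rewrite /strip_prefix ext_kq0; case: ifP. Qed.
Lemma strip_suffix0 q : strip_suffix q kq0 =1 kq0.
Proof. by move=> p; rewrite /strip_suffix ext_kq0; case: ifP. Qed.

Section ModuleIso.
Variables (gs : seq KQ) (R : KQ -> Prop).
Local Notation eqmod := (eqmod gs).
Local Notation G := (nth kq0 gs).

(* [rho] is a left inverse of multiplication by [P] modulo the ideal. *)
Lemma rmod_iso_mull e P (rho : KQ -> KQ) :
  fin_supp e -> fin_supp P -> kqmul e e =1 e -> kqmul P e =1 P ->
  (forall x y, eqmod x y -> eqmod (rho x) (rho y)) ->
  (forall m, rho (kqmul P m) =1 kqmul e m) ->
  rmod_iso gs R e P.
Proof.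
move=> fe fP ee Pe rho_eqmod rhoP.
have PeM r : kqmul P (kqmul e r) =1 kqmul P r.
  by move=> p; rewrite -kqmulA; apply: eq_kqmull.
have fix_e m r : eqmod m (kqmul e r) -> eqmod m (kqmul e m).
  move=> hm; apply: eqmod_trans hm (eqmod_trans _ (eqmod_mull fe (eqmod_sym hm))).
  by apply: eqmod_refl => p; rewrite -kqmulA (eq_kqmull _ ee).
exists (kqmul P); split; [|split; [|split; [|split; [|split]]]].
- move=> m [r [hr [hR hm]]]; exists r; split => //; split => //.
  exact: eqmod_trans (eqmod_mull fP hm) (eqmod_refl _ (PeM r)).
- by move=> m m' _ _; apply: eqmod_mull.
- by move=> m m' _ _; apply/eqmod_refl/kqmulDr.
- by move=> m r _ _ _; apply: eqmod_refl => p; rewrite kqmulA.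
- move=> m m' [r [_ [_ hm]]] [r' [_ [_ hm']]] /rho_eqmod.
  move/(eq_eqmod (rhoP m) (rhoP m')) => hem.
  exact: eqmod_trans (fix_e _ _ hm) (eqmod_trans hem (eqmod_sym (fix_e _ _ hm'))).
- move=> n [r [hr [hR hn]]]; exists (kqmul e r); split.
    by exists r; split => //; split => //; apply: eqmod_refl.
  exact: eqmod_trans (eqmod_refl _ (PeM r)) (eqmod_sym hn).
Qed.

Lemma lmod_iso_mulr e P (rho : KQ -> KQ) :
  fin_supp e -> fin_supp P -> kqmul e e =1 e -> kqmul e P =1 P ->
  (forall x y, eqmod x y -> eqmod (rho x) (rho y)) ->
  (forall m, rho (kqmul m P) =1 kqmul m e) ->
  lmod_iso gs R e P.
Proof.
move=> fe fP ee eP rho_eqmod rhoP.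
have PeM r : kqmul (kqmul r e) P =1 kqmul r P.
  by move=> p; rewrite kqmulA; apply: eq_kqmulr.
have fix_e m r : eqmod m (kqmul r e) -> eqmod m (kqmul m e).
  move=> hm; apply: eqmod_trans hm (eqmod_trans _ (eqmod_mulr fe (eqmod_sym hm))).
  by apply: eqmod_refl => p; rewrite kqmulA (eq_kqmulr _ ee).
exists (kqmul^~ P); split; [|split; [|split; [|split; [|split]]]].
- move=> m [r [hr [hR hm]]]; exists r; split => //; split => //.
  exact: eqmod_trans (eqmod_mulr fP hm) (eqmod_refl _ (PeM r)).
- by move=> m m' _ _; apply: eqmod_mulr.
- by move=> m m' _ _; apply/eqmod_refl/kqmulDl.
- by move=> m r _ _ _; apply: eqmod_refl => p; rewrite kqmulA.
- move=> m m' [r [_ [_ hm]]] [r' [_ [_ hm']]] /rho_eqmod.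
  move/(eq_eqmod (rhoP m) (rhoP m')) => hem.
  exact: eqmod_trans (fix_e _ _ hm) (eqmod_trans hem (eqmod_sym (fix_e _ _ hm'))).
- move=> n [r [hr [hR hn]]]; exists (kqmul r e); split.
    by exists r; split => //; split => //; apply: eqmod_refl.
  exact: eqmod_trans (eqmod_refl _ (PeM r)) (eqmod_sym hn).
Qed.

Section PathModule.
Variable q : rpath.
Hypothesis hq : rvalid q.

Lemma in_ideal_strip_prefix : (forall j, (j < size gs)%N -> vanish_src_along q (G j)) ->
  forall x, in_ideal gs x -> in_ideal gs (strip_prefix q x).
Proof.
move=> hG; apply: (@in_ideal_map gs (strip_prefix q) (strip_prefix q) id) => //.
- exact: eq_strip_prefix.
- exact: strip_prefixD.
- exact: strip_prefix0.
- exact: fin_supp_strip_prefix.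
- move=> a b j _ _ hj p /=; rewrite (eq_strip_prefix _ (kqmulA _ _ _)) strip_prefix_mul //.
    by rewrite kqmulA.
  exact: vanish_src_along_mulr (hG j hj).
Qed.

Lemma in_ideal_strip_suffix : (forall j, (j < size gs)%N -> vanish_tgt_along q (G j)) ->
  forall x, in_ideal gs x -> in_ideal gs (strip_suffix q x).
Proof.
move=> hG; apply: (@in_ideal_map gs (strip_suffix q) id (strip_suffix q)) => //.
- exact: eq_strip_suffix.
- exact: strip_suffixD.
- exact: strip_suffix0.
- exact: fin_supp_strip_suffix.
- move=> a b j _ _ hj p /=; rewrite strip_suffix_mul //.
  exact: vanish_tgt_along_mull (hG j hj).
Qed.

Lemma rmod_iso_pel : (forall j, (j < size gs)%N -> vanish_src_along q (G j)) ->
  rmod_iso gs R (vtx (rtgt q)) (pel q).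
Proof.
move=> hG; apply: (@rmod_iso_mull _ _ (strip_prefix q)).
- exact: fin_supp_vtx.
- exact: fin_supp_pel.
- exact: vtx_idem.
- exact: pel_vtxr.
- move=> x y /(in_ideal_strip_prefix hG); apply: eq_in_ideal => p.
  by rewrite strip_prefixD /Defs.kqadd strip_prefixN.
- exact: strip_prefix_pel.
Qed.

Lemma lmod_iso_pel : (forall j, (j < size gs)%N -> vanish_tgt_along q (G j)) ->
  lmod_iso gs R (vtx (rsrc q)) (pel q).
Proof.
move=> hG; apply: (@lmod_iso_mulr _ _ (strip_suffix q)).
- exact: fin_supp_vtx.
- exact: fin_supp_pel.
- exact: vtx_idem.
- exact: pel_vtxl.
- move=> x y /(in_ideal_strip_suffix hG); apply: eq_in_ideal => p.
  by rewrite strip_suffixD /Defs.kqadd strip_suffixN.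
- exact: strip_suffix_pel.
Qed.

End PathModule.
End ModuleIso.
End PathAlgebra.

(** * The stretched quiver *)

Lemma filter_iota_geq n m : (m <= n)%N -> [seq i <- iota 0 n | m <= i]%N = iota m (n - m).
Proof.
move=> hmn; rewrite -{1}(subnKC hmn) iotaD filter_cat add0n.
rewrite (@eq_in_filter _ _ pred0) => [|i]; last first.
  by rewrite mem_iota add0n => /andP [_ hi]; rewrite /= leqNgt hi.
rewrite filter_pred0 (@eq_in_filter _ _ predT) ?filter_predT // => i.
by rewrite mem_iota => /andP [].
Qed.

Lemma map_val_filter_ord n (P : pred nat) :
  map val [seq i <- enum 'I_n | P (val i)] = [seq i <- iota 0 n | P i].
Proof. by rewrite -val_enum_ord filter_map. Qed.

Lemma last_map_enum_ord (T : Type) n (f : 'I_n -> T) x (h : (n.-1 < n)%N) :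
  last x (map f (enum 'I_n)) = f (Ordinal h).
Proof.
case: n f h => // n f h; rewrite enum_ordSr map_rcons last_rcons.
by congr f; apply: val_inj.
Qed.

Section Stretched.
Variables (K : fieldType) (V E : finType) (src tgt : E -> V) (A : nat).
Hypothesis hA : (0 < A)%N.

Local Notation sV := (sV V E A).
Local Notation ssrc := (@ssrc V E src A).
Local Notation stgt := (@stgt V E tgt A).
Local Notation rvalid := (rvalid ssrc stgt).
Local Notation rtgt := (rtgt stgt).

Definition is_new (u : sV) : bool := if u is inr _ then true else false.

Lemma ssrc_new a (i : 'I_A) : (0 < i)%N -> is_new (ssrc (a, i)).
Proof.
move=> hi; have hlt : (i.-1 < A.-1)%N by have := ltn_ord i; lia.
rewrite /Defs.ssrc; have /negbTE -> : val i != 0%N by rewrite -lt0n.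
by case: insubP => //; rewrite hlt.
Qed.

Lemma stgt_new a (i : 'I_A) : (i < A.-1)%N -> is_new (stgt (a, i)).
Proof. by move=> h; rewrite /Defs.stgt insubT. Qed.

Lemma path_consecutive a c : forall k (i : 'I_A) (l : seq 'I_A), val i = k ->
  map val l = iota k.+1 c -> path (fun e1 e2 => stgt e1 == ssrc e2) (a, i) (map (pair a) l).
Proof.
elim: c => [|c IH] k i [|i' l] //= hi [hi' hl].
rewrite (IH k.+1 i' l) // andbT /Defs.stgt /Defs.ssrc hi' /= -hi.
have hlt : (i < A.-1)%N by have := ltn_ord i'; rewrite hi' -hi; lia.
by case: insubP => [j _ _ //|]; rewrite hlt.
Qed.

Lemma ord_succ_lt (j : 'I_A.-1) : (j.+1 < A)%N.
Proof. by have := ltn_ord j; lia. Qed.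

Lemma qtil_valid a (j : 'I_A.-1) : rvalid (qtil_raw (inr (a, j))).
Proof.
rewrite /qtil_raw; set l := filter _ (enum 'I_A).
have hl : map val l = iota j.+1 (A - j.+1).
  by rewrite (map_val_filter_ord A (fun k => j < k)%N) (filter_iota_geq (ltnW (ord_succ_lt j))).
move: hl; rewrite -(subnSK (ord_succ_lt j)).
case: l => [|i l'] //= [hi hl']; apply/andP; split; last exact: path_consecutive hl'.
rewrite /Defs.ssrc /= hi /=; case: insubP => [j' _ e|]; first by rewrite (val_inj e).
by rewrite ltn_ord.
Qed.

Lemma ptil_valid a (j : 'I_A.-1) : rvalid (ptil_raw src (inr (a, j))).
Proof.
rewrite /ptil_raw; set l := filter _ (enum 'I_A).
have hl : map val l = iota 0 j.+1.
  rewrite (map_val_filter_ord A (fun k => k <= j)%N).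
  exact: (@filter_iota_leq A 0 j (ltnW (ord_succ_lt j))).
case: l hl => [|i l'] //= [hi hl']; apply/andP; split; last exact: path_consecutive hl'.
by rewrite /Defs.ssrc /= hi.
Qed.

Lemma qtil_inner_new a (j : 'I_A.-1) k : let q := qtil_raw (inr (a, j)) in
  (k < size q.2)%N -> is_new (rtgt (q.1, take k q.2)).
Proof.
move=> q hk; rewrite (rtgt_take_src (a, Ordinal hA) (qtil_valid a j) hk).
have : nth (a, Ordinal hA) q.2 k \in q.2 by exact: mem_nth.
case/mapP=> i; rewrite mem_filter => /andP [hji _] ->.
by apply: ssrc_new; apply: leq_ltn_trans hji.
Qed.

Lemma ptil_inner_new a (j : 'I_A.-1) k : let q := ptil_raw src (inr (a, j)) in
  (0 < k <= size q.2)%N -> is_new (rtgt (q.1, take k q.2)).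
Proof.
move=> q hk; rewrite (rtgt_take_tgt _ _ (a, Ordinal hA) hk).
have : nth (a, Ordinal hA) q.2 k.-1 \in q.2 by apply: mem_nth; case: k hk.
case/mapP=> i; rewrite mem_filter => /andP [hij _] ->.
by apply: stgt_new; apply: leq_ltn_trans hij (ltn_ord j).
Qed.

Lemma rtgt_stretch_old (u : V) s : ~~ is_new (rtgt (stretch_path A (u, s))).
Proof.
have last_stretch b (x : sV) : last x (map stgt (stretch A b)) = inl (tgt b).
  have h : (A.-1 < A)%N by rewrite prednK.
  by rewrite /stretch -map_comp (last_map_enum_ord _ _ h) /= /Defs.stgt insubN //= ltnn.
rewrite /Defs.rtgt /=; have : ~~ is_new (inl u : sV) by [].
elim: s (inl u : sV) => [|b s IH] x hx //=.
by rewrite map_cat last_cat; apply: IH; rewrite last_stretch.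
Qed.

Lemma theta_src_new x p :
  is_new (rsrc (val p)) -> @theta V E src tgt A K x p = 0.
Proof. by rewrite /theta /destretch /rsrc; case: (val p) => [[u|u] s]. Qed.

Lemma theta_tgt_new x p :
  is_new (rtgt (val p)) -> @theta V E src tgt A K x p = 0.
Proof.
rewrite /theta /destretch; case: (val p) => [[u|u] s] //=; case: eqP => // <-.
by move/negP: (rtgt_stretch_old u [seq y.1 | y <- s & val y.2 == 0%N]).
Qed.

Lemma rmod_iso_qtil (gs : seq (KQ K src tgt)) (R : KQ K ssrc stgt -> Prop) a j :
  rmod_iso (map (@theta V E src tgt A K) gs) R
    (@vtx K _ _ ssrc stgt (rtgt (qtil_raw (inr (a, j))))) (@qtil V E src tgt A K (inr (a, j))).
Proof.
apply: rmod_iso_pel; first exact: qtil_valid.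
move=> i; rewrite size_map => hi k p hk hp; rewrite (nth_map (@kq0 K V E src tgt)) //.
by apply: theta_src_new; rewrite hp; apply: qtil_inner_new.
Qed.

Lemma lmod_iso_ptil (gs : seq (KQ K src tgt)) (R : KQ K ssrc stgt -> Prop) a j :
  lmod_iso (map (@theta V E src tgt A K) gs) R
    (@vtx K _ _ ssrc stgt (rsrc (ptil_raw src (inr (a, j))))) (@ptil V E src tgt A K (inr (a, j))).
Proof.
apply: lmod_iso_pel; first exact: ptil_valid.
move=> i; rewrite size_map => hi k p hk hp; rewrite (nth_map (@kq0 K V E src tgt)) //.
by apply: theta_tgt_new; rewrite hp; apply: ptil_inner_new.
Qed.

End Stretched.

Theorem proposition1p11 (K : fieldType) (V E : finType) (src tgt : E -> V)
  (gs : seq (@KQ K V E src tgt)) (A : nat)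
  (hA : (1 <= A)%N)
  (hfin : forall i, (i < size gs)%N -> fin_supp (nth (@kq0 K V E src tgt) gs i))
  (hunif : forall i, (i < size gs)%N -> uniform (nth (@kq0 K V E src tgt) gs i))
  (hadm : admissible gs)
  (hmin : minimal_gens gs)
  (w : sV V E A) (hw : forall u : V, w <> inl u) :
  let gt := map (@theta V E src tgt A K) gs in
  let v := rsrc (@ptil_raw V E src A w) in
  let v' := rtgt (@stgt V E tgt A) (@qtil_raw V E A w) in
  [/\ rmod_iso gt (@inB V E src tgt A K) (@vtx K _ _ (@ssrc V E src A) (@stgt V E tgt A) v')
                  (@qtil V E src tgt A K w),
      rmod_iso gt (@inLam V E src tgt A K) (@vtx K _ _ (@ssrc V E src A) (@stgt V E tgt A) v')
                  (@qtil V E src tgt A K w),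
      lmod_iso gt (@inB V E src tgt A K) (@vtx K _ _ (@ssrc V E src A) (@stgt V E tgt A) v)
                  (@ptil V E src tgt A K w)
    & lmod_iso gt (@inLam V E src tgt A K) (@vtx K _ _ (@ssrc V E src A) (@stgt V E tgt A) v)
                  (@ptil V E src tgt A K w)].
Proof.
case: w hw => [u /(_ u) //|[a j] _] gt v v'.
by split; [apply: rmod_iso_qtil | apply: rmod_iso_qtil
          | apply: lmod_iso_ptil | apply: lmod_iso_ptil].
Qed.
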